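(* Let $n\geq 4$, and let $\Omega_n\subset\mathbb{R}^{2n-3}$, the associated polygons, and $\Gamma_n$ be as described in the context. Define $\Theta:\mathbb{R}^5\to\mathbb{R}$ by $$\Theta(u_1,u_2,u_3,u_4,u_5)=u_1u_2(u_4^2+u_5^2-u_3^2)+u_4u_5(u_1^2+u_2^2-u_3^2),$$ and $\gamma:\Omega_n\to\mathbb{R}^{n-3}$ by $\gamma(\omega)=(\gamma_1(\omega),\dots,\gamma_{n-3}(\omega))$, where $\gamma_k(\omega)=\Theta(t_k,x_k,t_{k+1},x_{k+1},t_{k+2})$ for $\omega=(t_1,x_1,t_2,x_2,\dots,t_{n-2},x_{n-2},t_{n-1})$. Then $\Gamma_n=\gamma^{-1}(\{0\})$, and $\Gamma_n$ is a differentiable submanifold of dimension $n$ of $\mathbb{R}^{2n-3}$.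
   Context: Let $\mathcal V=\{(x,y,z)\in\mathbb{R}^3: 0<x<y+z,\ 0<y<x+z,\ 0<z<x+y\}$. For $(t,x,s)\in\mathcal V$ let $\alpha(t,x,s)\in\,]0,\pi[$ be the angle opposite the side of length $x$ in a triangle with side lengths $t,x,s$, i.e. $\alpha(t,x,s)=\arccos\frac{t^2+s^2-x^2}{2ts}$. Let $$\Omega_n=\Big\{\omega=(t_1,x_1,t_2,x_2,\dots,t_{n-2},x_{n-2},t_{n-1})\in(\mathbb{R}_{>0})^{2n-3}:\ (t_k,x_k,t_{k+1})\in\mathcal V \text{ for } k=1,\dots,n-2,\ \sum_{k=1}^{n-2}\alpha(t_k,x_k,t_{k+1})<2\pi\Big\}.$$ To $\omega\in\Omega_n$ associate the planar polygon $(M_1,\dots,M_n)$ with $M_n=O$ the origin, $M_k=t_k(\cos\theta_k,\sin\theta_k)$ for $1\le k\le n-1$, where $\theta_1=0$ and $\theta_{k+1}=\theta_k+\alpha(t_k,x_k,t_{k+1})$. Thus $t_k=M_nM_k$ and $x_k=M_kM_{k+1}$; the sides of the polygon have lengths $t_1,x_1,\dots,x_{n-2},t_{n-1}$, and $t_2,\dots,t_{n-2}$ are the lengths of the diagonals from $M_n$. The paper identifies $\Omega_n$ with the space of isometry classes of polygons star-shaped with respect to the vertex $M_n$. $\Gamma_n$ denotes the set of $\omega\in\Omega_n$ whose associated polygon is inscribable, i.e. all its vertices lie on a common circle. *)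

From HB Require Import structures.
From mathcomp Require Import all_boot all_order all_algebra.
From mathcomp Require Import all_classical all_reals all_analysis.
Set Implicit Arguments. Unset Strict Implicit. Unset Printing Implicit Defensive.
Import Order.TTheory GRing.Theory Num.Theory.
Import numFieldNormedType.Exports.
Local Open Scope classical_set_scope.
Local Open Scope ring_scope.

Section Polygons.
Variable R : realType.

(* nat-indexed access to the coordinates of a row vector (0 outside range) *)
Definition coord (m : nat) (w : 'rV[R]_m) (i : nat) : R :=
  match @insub _ (fun j => j < m)%N 'I_m i with
  | Some j => w ord0 j
  | None => 0
  end.

(* omega = (t_1, x_1, t_2, ..., x_{n-2}, t_{n-1}) stored 0-based:
   tt w k = t_{k+1} = coordinate 2k,  xx w k = x_{k+1} = coordinate 2k+1 *)
Definition tt (m : nat) (w : 'rV[R]_m) (k : nat) : R := coord w (2 * k).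
Definition xx (m : nat) (w : 'rV[R]_m) (k : nat) : R := coord w (2 * k + 1).

Definition inV (a b c : R) : Prop :=
  [/\ 0 < a < b + c, 0 < b < a + c & 0 < c < a + b].

(* angle opposite the side of length b in the triangle with sides a, b, c *)
Definition alpha (a b c : R) : R := acos ((a ^+ 2 + c ^+ 2 - b ^+ 2) / (2 * a * c)).

Definition alphak (m : nat) (w : 'rV[R]_m) (k : nat) : R :=
  alpha (tt w k) (xx w k) (tt w k.+1).

Definition Omega (n : nat) : set 'rV[R]_(2 * n - 3) :=
  [set w : 'rV[R]_(2 * n - 3) | (forall i, 0 < w ord0 i) /\
           (forall k, (k < n - 2)%N -> inV (tt w k) (xx w k) (tt w k.+1)) /\
           \sum_(k < n - 2) alphak w k < 2 * pi].

(* theta_{k+1} (0-based k): theta_1 = 0, theta_{k+1} = theta_k + alpha_k *)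
Definition theta (m : nat) (w : 'rV[R]_m) (k : nat) : R :=
  \sum_(j < k) alphak w j.

(* vertex M_{k+1}, for k < n-1; M_n is the origin *)
Definition vertex (m : nat) (w : 'rV[R]_m) (k : nat) : R * R :=
  (tt w k * cos (theta w k), tt w k * sin (theta w k)).

Definition inscribable (n : nat) (w : 'rV[R]_(2 * n - 3)) : Prop :=
  exists (a b r : R), 0 < r /\
    (0 - a) ^+ 2 + (0 - b) ^+ 2 = r ^+ 2 /\
    (forall k, (k < n - 1)%N ->
       ((vertex w k).1 - a) ^+ 2 + ((vertex w k).2 - b) ^+ 2 = r ^+ 2).

Definition Gamma (n : nat) : set 'rV[R]_(2 * n - 3) :=
  [set w : 'rV[R]_(2 * n - 3) | @Omega n w /\ inscribable w].

Definition Theta (u1 u2 u3 u4 u5 : R) : R :=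
  u1 * u2 * (u4 ^+ 2 + u5 ^+ 2 - u3 ^+ 2) + u4 * u5 * (u1 ^+ 2 + u2 ^+ 2 - u3 ^+ 2).

Definition gamma (n : nat) (w : 'rV[R]_(2 * n - 3)) : 'rV[R]_(n - 3) :=
  \row_(k < n - 3) Theta (tt w k) (xx w k) (tt w k.+1) (xx w k.+1) (tt w k.+2).

Fixpoint iterD (N M : nat) (vs : seq 'rV[R]_N) (f : 'rV[R]_N -> 'rV[R]_M)
  : 'rV[R]_N -> 'rV[R]_M :=
  match vs with
  | [::] => f
  | v :: vs' => fun x => derive (iterD vs' f) x v
  end.

Definition smooth_on (N M : nat) (U : set 'rV[R]_N) (f : 'rV[R]_N -> 'rV[R]_M)
  : Prop :=
  forall vs : seq 'rV[R]_N,
    (forall x, U x -> {for x, continuous (iterD vs f)}) /\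
    (forall x v, U x -> derivable (iterD vs f) x v).

(* S is a (smooth) differentiable submanifold of R^N of dimension d:
   locally straightened by a smooth diffeomorphism onto R^d x {0} *)
Definition submanifold (N d : nat) (S : set 'rV[R]_N) : Prop :=
  forall p, S p ->
    exists (U V : set 'rV[R]_N) (phi psi : 'rV[R]_N -> 'rV[R]_N),
      [/\ open U, U p, open V, smooth_on U phi & smooth_on V psi] /\
      [/\ (forall x, U x -> V (phi x) /\ psi (phi x) = x),
          (forall y, V y -> U (psi y) /\ phi (psi y) = y) &
          (forall x, U x ->
             (S x <-> forall i : 'I_N, (d <= i)%N -> phi x ord0 i = 0))].

End Polygons.
Arguments Omega R n : clear implicits.
Arguments Gamma R n : clear implicits.
Arguments gamma {R n}.
Arguments submanifold {R N} d S.

(* Write the vertices in polar form M_k = t_k e^(i theta_k).  A circle through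
   the origin meets the ray of angle theta at distance A cos theta + B sin theta,
   and such sinusoids P satisfy the three-term (Ptolemy) relation
     P(th+a+b) sin a - P(th+a) sin(a+b) + P(th) sin b = 0.
   Since this relation is a second-order recurrence, the polygon is inscribable
   (t_k = P(theta_k) for the P through t_1 and t_2) iff the t_k satisfy it for
   every three consecutive vertices; by the laws of sines and cosines the k-th
   relation says that opposite angles of O M_k M_(k+1) M_(k+2) sum to pi, which
   is gamma_k = 0.
   For the manifold structure,
     omega |-> (t_1, t_2, alpha_1, ..., alpha_(n-2), t_3 - P_3, ..., t_(n-1) - P_(n-1))
   is a diffeomorphism of Omega_n onto an open set, with explicit inverse (the
   x_k are recovered by the law of cosines), which straightens Gamma_n onto the
   first n coordinates.  Smoothness of both maps is obtained once and for all by
   symbolic differentiation of the closed-form expressions built from +, *, ^-1,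
   sqrt, cos, sin and acos that define them. *)

From HB Require Import structures.
From mathcomp Require Import all_boot all_order all_algebra.
From mathcomp Require Import all_classical all_reals all_analysis.
From mathcomp Require Import ring lra zify.
(* After mathcomp, so that [coord] is the one of Defs and not that of vector.v. *)
From Pilot Require Import Defs.
Import Order.TTheory GRing.Theory Num.Theory.
Import numFieldNormedType.Exports.

Set Implicit Arguments.
Unset Strict Implicit.
Unset Printing Implicit Defensive.

Local Open Scope classical_set_scope.
Local Open Scope ring_scope.

Inductive expr (R : Type) :=
| EVar of nat | ECst of R | EAdd of expr R & expr R | EMul of expr R & expr R
| ENeg of expr R | EInv of expr R | ESqrt of expr R | ECos of expr R
| ESin of expr R | EAcos of expr R.

Arguments EVar {R}. Arguments ECst {R}. Arguments EAdd {R}. Arguments EMul {R}.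
Arguments ENeg {R}. Arguments EInv {R}. Arguments ESqrt {R}. Arguments ECos {R}.
Arguments ESin {R}. Arguments EAcos {R}.

Lemma near_forall_ltn (T : topologicalType) (x : T) m (P : nat -> T -> Prop) :
  (forall j, (j < m)%N -> \forall y \near x, P j y) ->
  \forall y \near x, forall j, (j < m)%N -> P j y.
Proof.
move=> h; have /filter_forall : forall j : 'I_m, \forall y \near x, P j y.
  by move=> j; exact: h.
by apply: filterS => y Py j hj; exact: (Py (Ordinal hj)).
Qed.

Section SmoothExpr.
Variables (R : realType) (N : nat).
Implicit Types (x v : 'rV[R]_N) (e : expr R).

Fixpoint eval e x : R :=
  match e with
  | EVar i => coord x i
  | ECst c => c
  | EAdd a b => eval a x + eval b x
  | EMul a b => eval a x * eval b x
  | ENeg a => - eval a x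
  | EInv a => (eval a x)^-1
  | ESqrt a => Num.sqrt (eval a x)
  | ECos a => cos (eval a x)
  | ESin a => sin (eval a x)
  | EAcos a => acos (eval a x)
  end.

(* [x] lies in the open set where every subterm of [e] is smooth. *)
Fixpoint defined e x : Prop :=
  match e with
  | EVar _ | ECst _ => True
  | EAdd a b | EMul a b => defined a x /\ defined b x
  | ENeg a | ECos a | ESin a => defined a x
  | EInv a => defined a x /\ eval a x != 0
  | ESqrt a => defined a x /\ 0 < eval a x
  | EAcos a => defined a x /\ -1 < eval a x < 1
  end.

Fixpoint dexpr v e : expr R :=
  match e with
  | EVar i => ECst (coord v i)
  | ECst _ => ECst 0
  | EAdd a b => EAdd (dexpr v a) (dexpr v b)
  | EMul a b => EAdd (EMul (dexpr v a) b) (EMul a (dexpr v b))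
  | ENeg a => ENeg (dexpr v a)
  | EInv a => ENeg (EMul (dexpr v a) (EInv (EMul a a)))
  | ESqrt a => EMul (dexpr v a) (EInv (EMul (ECst 2) (ESqrt a)))
  | ECos a => ENeg (EMul (dexpr v a) (ESin a))
  | ESin a => EMul (dexpr v a) (ECos a)
  | EAcos a =>
      ENeg (EMul (dexpr v a) (EInv (ESqrt (EAdd (ECst 1) (ENeg (EMul a a))))))
  end.

Fixpoint dexprs (vs : seq 'rV[R]_N) e : expr R :=
  if vs is v :: vs' then dexpr v (dexprs vs' e) else e.

Lemma defined_dexpr v e x : defined e x -> defined (dexpr v e) x.
Proof.
elim: e => //=.
- by move=> a iha b ihb [/iha ? /ihb ?].
- by move=> a iha b ihb [ha hb]; split; split => //; [apply: iha | apply: ihb].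
- move=> a iha [ha hn]; split; first exact: iha.
  by split; [split|exact: mulf_neq0].
- move=> a iha [ha hp]; split; first exact: iha.
  split; first by split.
  by rewrite mulf_neq0 // ?gt_eqF // ?sqrtr_gt0.
- by move=> a iha ha; split => //; exact: iha.
- by move=> a iha ha; split => //; exact: iha.
- move=> a iha [ha /andP[h1 h2]]; split; first exact: iha.
  have hp : 0 < 1 + - (eval a x * eval a x) by nra.
  split; last by rewrite gt_eqF // sqrtr_gt0.
  by split => //; split => //; split.
Qed.

Lemma defined_dexprs vs e x : defined e x -> defined (dexprs vs e) x.
Proof. by elim: vs => //= v vs ih /ih; apply: defined_dexpr. Qed.

Lemma diff_coord (i : nat) x :
  differentiable (fun y : 'rV[R]_N => coord y i) x /\
  forall v, 'd (fun y : 'rV[R]_N => coord y i) x v = coord v i.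
Proof.
rewrite /coord; case: insubP => [j _ _|_]; last first.
  by split=> [|v]; [exact: differentiable_cst | rewrite diff_cst].
have lin : linear (fun M : 'rV[R]_N => M ord0 j) by move=> a u w; rewrite !mxE.
pose f : {linear 'rV[R]_N -> R} :=
  HB.pack (fun M : 'rV[R]_N => M ord0 j) (GRing.isLinear.Build _ _ _ _ _ lin).
rewrite (_ : (fun _ => _) = f) //.
have cf : continuous f by exact: coord_continuous.
by split=> [|v]; [exact: linear_differentiable | rewrite diff_lin].
Qed.

Lemma diff_comp_derive (f : 'rV[R]_N -> R) (g : R -> R) x dg :
  differentiable f x -> is_derive (f x) 1 g dg ->
  differentiable (g \o f) x /\ forall v, 'd (g \o f) x v = 'd f x v * dg.
Proof.
move=> df hg; have dg1 : differentiable g (f x).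
  by apply/derivable1_diffP; case: hg.
split=> [|v]; first exact: differentiable_comp.
rewrite diff_comp //= deriv1E; last by case: hg.
by rewrite derive1E derive_val.
Qed.

Lemma eval_diff e x : defined e x ->
  differentiable (eval e) x /\ forall v, 'd (eval e) x v = eval (dexpr v e) x.
Proof.
elim: e x => /=.
- by move=> i x _; exact: diff_coord.
- by move=> c x _; split=> [|v]; [exact: differentiable_cst | rewrite diff_cst].
- move=> a iha b ihb x [/iha [da ha] /ihb [db hb]].
  have -> : (fun y => eval a y + eval b y) = eval a + eval b by [].
  by split=> [|v]; [exact: differentiableD | rewrite diffD //= ha hb].
- move=> a iha b ihb x [/iha [da ha] /ihb [db hb]].
  have -> : (fun y => eval a y * eval b y) = eval a * eval b by [].
  split=> [|v]; first exact: differentiableM.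
  rewrite diffM //=.
  transitivity (eval a x * 'd (eval b) x v + eval b x * 'd (eval a) x v) => //.
  by rewrite ha hb; ring.
- move=> a iha x /iha [da ha].
  have -> : (fun y => - eval a y) = - eval a by [].
  split=> [|v]; first exact: differentiableN.
  by rewrite diffN //; transitivity (- 'd (eval a) x v) => //; rewrite ha.
- move=> a iha x [/iha [da ha] hn].
  split=> [|v]; first exact: differentiableV.
  rewrite diffV //; transitivity (- (eval a x) ^- 2 * 'd (eval a) x v) => //.
  by rewrite ha mulNr mulrC expr2.
- move=> a iha x [/iha [da ha] hp].
  have [dc hc] := diff_comp_derive da (is_derive1_sqrt hp).
  by split => // v; rewrite hc ha.
- move=> a iha x /iha [da ha].
  have [dc hc] := diff_comp_derive da (is_derive_cos (eval a x)).
  by split => // v; rewrite hc ha mulrN.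
- move=> a iha x /iha [da ha].
  have [dc hc] := diff_comp_derive da (is_derive_sin (eval a x)).
  by split => // v; rewrite hc ha.
- move=> a iha x [/iha [da ha] hp].
  have [dc hc] := diff_comp_derive da (is_derive1_acos hp).
  by split => // v; rewrite hc ha mulrN expr2.
Qed.

Lemma eval_continuous e x : defined e x -> eval e @ x --> eval e x.
Proof. by move=> /eval_diff[/differentiable_continuous]. Qed.

Lemma near_eval_gt0 e x : defined e x -> 0 < eval e x -> \forall y \near x, 0 < eval e y.
Proof. by move=> de; apply: (cvgr_gt _ (eval_continuous de)). Qed.

Lemma near_eval_lt e x c : defined e x -> eval e x < c -> \forall y \near x, eval e y < c.
Proof. by move=> de; apply: (cvgr_lt _ (eval_continuous de)). Qed.

Definition row_expr M (F : nat -> expr R) x : 'rV[R]_M := \row_(j < M) eval (F j) x.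

Lemma coord_row_expr M F x i : (i < M)%N -> coord (row_expr M F x) i = eval (F i) x.
Proof. by move=> hi; rewrite /coord insubT /= mxE. Qed.

Lemma row_expr_diff M F x : (forall j, (j < M)%N -> defined (F j) x) ->
  differentiable (row_expr M F) x /\
  forall v, 'D_v (row_expr M F) x = row_expr M (fun j => dexpr v (F j)) x.
Proof.
move=> hF.
have dF (j : 'I_M) := eval_diff (hF j (ltn_ord j)).
have -> : row_expr M F = \sum_(j < M) (fun y => eval (F j) y *: delta_mx 0 j).
  rewrite fct_sumE; apply/funext => y; rewrite [LHS]row_sum_delta.
  by apply: eq_bigr => j _; rewrite mxE.
have dFZ (j : 'I_M) :
    differentiable (fun y => eval (F j) y *: (delta_mx 0 j : 'rV[R]_M)) x.
  by apply: differentiableZl; case: (dF j).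
split=> [|v]; first exact: differentiable_sum.
rewrite derive_sum; last by move=> j; apply: diff_derivable.
rewrite [RHS]row_sum_delta; apply: eq_bigr => j _.
by rewrite deriveE // diffZl ?mxE; case: (dF j) => // _ ->.
Qed.

Section OpenDomain.
Variables (U : set 'rV[R]_N) (M : nat) (F : nat -> expr R).
Hypotheses (oU : open U) (UF : forall x, U x -> forall j, (j < M)%N -> defined (F j) x).

Lemma iterD_row_expr vs x : U x ->
  iterD vs (row_expr M F) x = row_expr M (fun j => dexprs vs (F j)) x.
Proof.
elim: vs x => // v vs ih x Ux /=.
have Un : \forall y \near x, U y by apply: open_nbhs_nbhs.
rewrite (@near_eq_derive _ _ _ _ (row_expr M (fun j => dexprs vs (F j)))).
  have hd j (hj : (j < M)%N) := defined_dexprs vs (UF Ux hj).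
  by case: (row_expr_diff hd) => _ ->.
by near=> y; apply: ih; near: y.
Unshelve. all: by end_near.
Qed.

Lemma smooth_row_expr : smooth_on U (row_expr M F).
Proof.
move=> vs.
have near_iterD x : U x ->
    \forall y \near x, row_expr M (fun j => dexprs vs (F j)) y = iterD vs (row_expr M F) y.
  move=> Ux; have Un : \forall y \near x, U y by apply: open_nbhs_nbhs.
  by near=> y; rewrite iterD_row_expr //; near: y.
have diffD x : U x -> differentiable (row_expr M (fun j => dexprs vs (F j))) x.
  by move=> Ux; case: (row_expr_diff (fun j hj => defined_dexprs vs (UF Ux hj))).
split=> [x Ux | x v Ux].
  rewrite /prop_for /continuous_at iterD_row_expr //.
  exact: cvg_trans (near_eq_cvg (near_iterD x Ux))
                   (differentiable_continuous (diffD x Ux)).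
apply: near_eq_derivable (near_iterD x Ux) _.
exact: diff_derivable (diffD x Ux).
Unshelve. all: by end_near.
Qed.

End OpenDomain.
End SmoothExpr.

Section Triangle.
Variable R : realType.
Implicit Types a b c t : R.

Definition law_cos a b c : R := (a ^+ 2 + c ^+ 2 - b ^+ 2) / (2 * a * c).

Definition ptolemy (t0 t1 t2 a b : R) : R :=
  t2 * sin a - t1 * sin (a + b) + t0 * sin b.

Definition sinusoid (A B th : R) : R := A * cos th + B * sin th.

Lemma inV_gt0 a b c : inV a b c -> [/\ 0 < a, 0 < b & 0 < c].
Proof. by case=> /andP[? ?] /andP[? ?] /andP[? ?]. Qed.

Lemma inV_swap12 a b c : inV a b c -> inV b a c.
Proof.
by case=> /andP[? ?] /andP[? ?] /andP[? ?]; split; apply/andP; split => //; lra.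
Qed.

Lemma inV_swap23 a b c : inV a b c -> inV a c b.
Proof.
by case=> /andP[? ?] /andP[? ?] /andP[? ?]; split; apply/andP; split => //; lra.
Qed.

Lemma law_cos_bounds a b c : inV a b c -> -1 < law_cos a b c < 1.
Proof.
case=> /andP[a0 ?] /andP[b0 ?] /andP[c0 ?].
have ac : 0 < 2 * a * c by rewrite !mulr_gt0.
by rewrite ltr_pdivlMr // ltr_pdivrMr //; apply/andP; split; nra.
Qed.

Lemma alphaC a b c : alpha a b c = alpha c b a.
Proof. by rewrite /alpha [a ^+ 2 + _]addrC [2 * a * c]mulrAC. Qed.

Lemma cos_alpha a b c : inV a b c -> cos (alpha a b c) = law_cos a b c.
Proof. by move/law_cos_bounds => /andP[? ?]; rewrite acosK // in_itv /= !ltW. Qed.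

Lemma alpha_in_0pi a b c : inV a b c -> 0 < alpha a b c < pi.
Proof.
move/law_cos_bounds => /andP[c1 c2].
by rewrite acos_gt0 ?acos_ltpi ?ltW ?c1.
Qed.

Lemma sin_alpha_gt0 a b c : inV a b c -> 0 < sin (alpha a b c).
Proof. by move/alpha_in_0pi; apply: sin_gt0_pi. Qed.

Lemma projection_formula a b c : inV a b c ->
  a = c * cos (alpha a b c) + b * cos (alpha a c b).
Proof.
move=> h; have [a0 b0 c0] := inV_gt0 h.
by rewrite (cos_alpha h) (cos_alpha (inV_swap23 h)) /law_cos; field; rewrite !gt_eqF.
Qed.

Lemma law_of_sines a b c : inV a b c -> c * sin (alpha a b c) = b * sin (alpha a c b).
Proof.
move=> h; have [a0 b0 c0] := inV_gt0 h; have h' := inV_swap23 h.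
apply/eqP; rewrite -(eqrXn2 (n := 2)) //; last 2 first.
- by rewrite mulr_ge0 ?ltW ?sin_alpha_gt0.
- by rewrite mulr_ge0 ?ltW ?sin_alpha_gt0.
rewrite !exprMn !sin2cos2 (cos_alpha h) (cos_alpha h') /law_cos.
by apply/eqP; field; rewrite !gt_eqF.
Qed.

Lemma sin_add_eq0 (A C : R) : 0 < A < pi -> 0 < C < pi ->
  sin (A + C) = 0 <-> cos A + cos C = 0.
Proof.
move=> /sin_gt0_pi sA /sin_gt0_pi sC; rewrite sinD.
have eA := cos2Dsin2 A; have eC := cos2Dsin2 C.
split=> h.
  have e : cos C ^+ 2 = cos A ^+ 2.
    have e2 : (sin A * cos C) ^+ 2 = (cos A * sin C) ^+ 2.
      by rewrite (_ : sin A * cos C = - (cos A * sin C)) ?sqrrN //; lra.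
    by move: e2; rewrite !exprMn !sin2cos2; lra.
  have [eCA | eCA] : cos C = cos A \/ cos C = - cos A.
    by move/eqP: e; rewrite eqf_sqr => /orP[] /eqP; [left | right].
  + have : cos A * (sin A + sin C) = 0 by move: h; rewrite eCA; nra.
    by move/eqP; rewrite mulf_eq0 [sin A + _ == 0]gt_eqF ?addr_gt0 // orbF => /eqP; lra.
  + by lra.
have eCA : cos C = - cos A by lra.
have eS : sin C = sin A.
  apply/eqP; rewrite -(eqrXn2 (n := 2)) ?ltW //; apply/eqP.
  by rewrite !sin2cos2 eCA sqrrN.
by rewrite eCA eS; lra.
Qed.

Lemma Theta_law_cos t0 x0 t1 x1 t2 : 0 < t0 -> 0 < x0 -> 0 < x1 -> 0 < t2 ->
  Theta t0 x0 t1 x1 t2 = 2 * t0 * x0 * t2 * x1 * (law_cos t0 t1 x0 + law_cos t2 t1 x1).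
Proof. by move=> *; rewrite /Theta /law_cos; field; rewrite !gt_eqF. Qed.

(* [alpha t0 t1 x0] and [alpha t2 t1 x1] are the angles at M_k and M_(k+2) of the
   quadrilateral O M_k M_(k+1) M_(k+2). *)
Lemma ptolemy_alpha t0 x0 t1 x1 t2 : inV t0 x0 t1 -> inV t1 x1 t2 ->
  t1 * ptolemy t0 t1 t2 (alpha t0 x0 t1) (alpha t1 x1 t2) =
  x0 * x1 * sin (alpha t0 t1 x0 + alpha t2 t1 x1).
Proof.
move=> h g; have g' : inV t2 x1 t1 by apply/inV_swap12/inV_swap23/inV_swap12.
have projA := projection_formula h; have projC := projection_formula g'.
have sinesA := law_of_sines h; have sinesC := law_of_sines g'.
rewrite alphaC in projC sinesC.
set a := alpha t0 x0 t1 in projA sinesA *; set b := alpha t1 x1 t2 in projC sinesC *.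
transitivity (t1 * sin a * (t2 - t1 * cos b) + t1 * sin b * (t0 - t1 * cos a)).
  by rewrite /ptolemy sinD; ring.
by rewrite sinesA sinesC {2}projA {1}projC sinD; ring.
Qed.

Lemma ptolemy_alpha_eq0 t0 x0 t1 x1 t2 : inV t0 x0 t1 -> inV t1 x1 t2 ->
  ptolemy t0 t1 t2 (alpha t0 x0 t1) (alpha t1 x1 t2) = 0 <->
  Theta t0 x0 t1 x1 t2 = 0.
Proof.
move=> h g; have g' : inV t2 x1 t1 by apply/inV_swap12/inV_swap23/inV_swap12.
have [t00 x00 t10] := inV_gt0 h; have [_ x10 t20] := inV_gt0 g.
have nz (u v : R) : 0 < u -> (u * v = 0) = (v = 0).
  move=> u0; apply/propext; split=> [/eqP|->]; last by rewrite mulr0.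
  by rewrite mulf_eq0 gt_eqF //= => /eqP.
have hA := inV_swap23 h; have hC := inV_swap23 g'.
have x0x1 : 0 < x0 * x1 by rewrite mulr_gt0.
have pos : 0 < 2 * t0 * x0 * t2 * x1 by rewrite !mulr_gt0.
rewrite -(nz t1) // ptolemy_alpha // nz // sin_add_eq0 ?alpha_in_0pi //.
by rewrite (cos_alpha hA) (cos_alpha hC) Theta_law_cos // nz.
Qed.

Lemma ptolemy_sinusoid (A B th a b : R) :
  ptolemy (sinusoid A B th) (sinusoid A B (th + a)) (sinusoid A B (th + a + b)) a b = 0.
Proof.
have e := cos2Dsin2 a.
transitivity (sinusoid A B th * sin b * (1 - (cos a ^+ 2 + sin a ^+ 2))).
  by rewrite /ptolemy /sinusoid !(cosD, sinD); ring.
by rewrite e subrr mulr0.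
Qed.

Lemma ptolemyB t0 t1 t2 u0 u1 u2 a b :
  ptolemy (t0 - u0) (t1 - u1) (t2 - u2) a b = ptolemy t0 t1 t2 a b - ptolemy u0 u1 u2 a b.
Proof. by rewrite /ptolemy; ring. Qed.

Lemma on_circle_through0 t th a b : t != 0 ->
  (t * cos th - a) ^+ 2 + (t * sin th - b) ^+ 2 = a ^+ 2 + b ^+ 2 <->
  t = sinusoid (2 * a) (2 * b) th.
Proof.
move=> t0; have e := cos2Dsin2 th.
have key : (t * cos th - a) ^+ 2 + (t * sin th - b) ^+ 2 - (a ^+ 2 + b ^+ 2) =
           t * (t - sinusoid (2 * a) (2 * b) th).
  transitivity (t ^+ 2 * (cos th ^+ 2 + sin th ^+ 2) - t * sinusoid (2 * a) (2 * b) th).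
    by rewrite /sinusoid; ring.
  by rewrite e; ring.
split=> [/eqP | e2]; first by rewrite -subr_eq0 key mulf_eq0 (negbTE t0) subr_eq0 => /eqP.
by apply/eqP; rewrite -subr_eq0 key -e2 subrr mulr0.
Qed.

Definition third_side (t t' a : R) : R :=
  Num.sqrt (t ^+ 2 + t' ^+ 2 - 2 * t * t' * cos a).

Lemma cos_in_open (a : R) : 0 < a < pi -> -1 < cos a < 1.
Proof.
move=> /andP[a0 api]; have aI : a \in `[0, pi] by rewrite in_itv /= !ltW.
rewrite !lt_neqAle cos_geN1 cos_le1 !andbT; apply/andP; split; apply/eqP => e.
  by have := cosK aI; rewrite -e acosN1; lra.
by have := cosK aI; rewrite e acos1; lra.
Qed.

Lemma third_side_inV (t t' a : R) : 0 < t -> 0 < t' -> 0 < a < pi ->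
  inV t (third_side t t' a) t' /\ alpha t (third_side t t' a) t' = a.
Proof.
move=> t0 t'0 a_in; have /andP[c1 c2] := cos_in_open a_in.
set x := third_side t t' a.
have p1 : 0 < t * t' * (1 - cos a) by rewrite !mulr_gt0 //; lra.
have p2 : 0 < t * t' * (1 + cos a) by rewrite !mulr_gt0 //; lra.
have q0 : 0 < t ^+ 2 + t' ^+ 2 - 2 * t * t' * cos a by have := sqr_ge0 (t - t'); nra.
have x0 : 0 < x by rewrite sqrtr_gt0.
have x2 : x ^+ 2 = t ^+ 2 + t' ^+ 2 - 2 * t * t' * cos a by rewrite sqr_sqrtr // ltW.
have sq_lt (u v : R) : 0 <= u -> 0 <= v -> u ^+ 2 < v ^+ 2 -> u < v by move=> *; nra.
have lower : `|t - t'| < x.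
  apply: sq_lt; [exact: normr_ge0 | exact: ltW |].
  by rewrite real_normK ?num_real // x2; nra.
have upper : x < t + t'.
  by apply: sq_lt; [exact: ltW | rewrite ltW ?addr_gt0 | rewrite x2; nra].
have := ler_norm (t - t'); have := ler_norm (t' - t); rewrite distrC => n1 n2.
split; first by split; apply/andP; split => //; lra.
have -> : alpha t x t' = acos (law_cos t x t') by [].
have -> : law_cos t x t' = cos a by rewrite /law_cos x2; field; rewrite !gt_eqF.
by case/andP: a_in => ? ?; rewrite cosK // in_itv /= !ltW.
Qed.

Lemma third_side_alpha t x t' : inV t x t' -> third_side t t' (alpha t x t') = x.
Proof.
move=> h; have [t0 x0 t'0] := inV_gt0 h.
rewrite /third_side cos_alpha // /law_cos.
rewrite (_ : _ - _ = x ^+ 2) ?sqrtr_sqr ?gtr0_norm //.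
by field; rewrite !gt_eqF.
Qed.

End Triangle.

Section Inscribed.
Variables (R : realType) (n : nat).
Hypothesis n_ge4 : (4 <= n)%N.
Local Notation N := (2 * n - 3)%N.
Implicit Types w : 'rV[R]_N.

(* Distance from O, along the ray of angle [th], to the circle through O and the
   points at distance [t0] on the ray of angle 0 and [t1] on the ray of angle [a0]. *)
Definition chord_of (t0 t1 a0 th : R) : R :=
  sinusoid t0 ((t1 - t0 * cos a0) / sin a0) th.

Definition chord m (w : 'rV[R]_m) k : R :=
  chord_of (tt w 0) (tt w 1) (alphak w 0) (theta w k).

Lemma chord_of_sinusoid (A B a0 th : R) : sin a0 != 0 ->
  chord_of (sinusoid A B 0) (sinusoid A B a0) a0 th = sinusoid A B th.
Proof. by move=> s0; rewrite /chord_of /sinusoid cos0 sin0; congr (_ + _ * _); field. Qed.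

Lemma theta0 m (w : 'rV[R]_m) : theta w 0 = 0.
Proof. by rewrite /theta big_ord0. Qed.

Lemma thetaS m (w : 'rV[R]_m) k : theta w k.+1 = theta w k + alphak w k.
Proof. by rewrite /theta big_ord_recr. Qed.

Lemma chord0 m (w : 'rV[R]_m) : chord w 0 = tt w 0.
Proof. by rewrite /chord /chord_of /sinusoid theta0 cos0 sin0; ring. Qed.

Lemma chord1 m (w : 'rV[R]_m) : sin (alphak w 0) != 0 -> chord w 1 = tt w 1.
Proof. by move=> s0; rewrite /chord /chord_of /sinusoid thetaS theta0 add0r; field. Qed.

Lemma Omega_inV w k : Omega R n w -> (k < n - 2)%N ->
  inV (tt w k) (xx w k) (tt w k.+1).
Proof. by case=> _ [+ _]; apply. Qed.

Lemma Omega_tt_gt0 w k : Omega R n w -> (k <= n - 2)%N -> 0 < tt w k.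
Proof.
move=> Om hk; have [k_lt | k_eq] : (k < n - 2)%N \/ k = (n - 3).+1 by lia.
  by case: (inV_gt0 (Omega_inV Om k_lt)).
by have [_ _] := inV_gt0 (Omega_inV (k := n - 3) Om ltac:(lia)); rewrite k_eq.
Qed.

Lemma Omega_sin_alphak w k : Omega R n w -> (k < n - 2)%N -> sin (alphak w k) != 0.
Proof. by move=> Om hk; rewrite gt_eqF //; apply/sin_alpha_gt0/Omega_inV. Qed.

Lemma inscribable_chord w : Omega R n w ->
  inscribable w <-> forall k, (2 <= k <= n - 2)%N -> tt w k = chord w k.
Proof.
move=> Om; have s0 := Omega_sin_alphak Om (ltac:(lia) : (0 < n - 2)%N).
split.
  case=> a [b [r [_ [e0 ek]]]] k /andP[k2 kn].
  have tE j : (j < n - 1)%N -> tt w j = sinusoid (2 * a) (2 * b) (theta w j).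
    move=> hj; apply/on_circle_through0; first by rewrite gt_eqF // Omega_tt_gt0 //; lia.
    by have := ek j hj; rewrite -e0 !sub0r !sqrrN.
  rewrite /chord (tE 0%N) ?(tE 1%N) ?(tE k) //; try lia.
  by rewrite theta0 thetaS theta0 add0r chord_of_sinusoid.
move=> tE; set B := (tt w 1 - tt w 0 * cos (alphak w 0)) / sin (alphak w 0).
have t0_gt0 := Omega_tt_gt0 (k := 0) Om ltac:(lia).
have r2_gt0 : 0 < (tt w 0 / 2) ^+ 2 + (B / 2) ^+ 2.
  by rewrite ltr_pwDl ?sqr_ge0 // exprn_gt0 // divr_gt0.
exists (tt w 0 / 2), (B / 2), (Num.sqrt ((tt w 0 / 2) ^+ 2 + (B / 2) ^+ 2)).
rewrite sqrtr_gt0 sqr_sqrtr ?ltW // !sub0r !sqrrN; split=> //; split=> // k hk.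
apply/on_circle_through0; first by rewrite gt_eqF // Omega_tt_gt0 //; lia.
have half (u : R) : 2 * (u / 2) = u by rewrite mulrC divfK // pnatr_eq0.
rewrite !half.
have [k_lt2 | /tE //] : (k < 2)%N \/ (2 <= k <= n - 2)%N by lia.
by case: k {hk} k_lt2 => [|[|//]] _; apply/esym; [exact: chord0 | exact: chord1].
Qed.

Lemma ptolemy_seq_eq0 (d a : nat -> R) m : d 0 = 0 -> d 1 = 0 ->
  (forall k, (k < m)%N -> sin (a k) != 0) ->
  (forall k, (k < m)%N -> ptolemy (d k) (d k.+1) (d k.+2) (a k) (a k.+1) = 0) <->
  forall k, (k <= m.+1)%N -> d k = 0.
Proof.
move=> d0 d1 sa; split=> [h | h k hk]; last first.
  by rewrite /ptolemy !h ?mul0r ?subrr ?addr0 //; lia.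
suff d2 k : (k <= m)%N -> d k = 0 /\ d k.+1 = 0.
  by move=> k hk; case: k hk => [|k] hk; [exact: d0 | case: (d2 k ltac:(lia))].
elim: k => [//|k ih hk]; have [dk dk1] := ih ltac:(lia); split=> //.
have := h k ltac:(lia); rewrite /ptolemy dk dk1 !mul0r subr0 addr0 => /eqP.
by rewrite mulf_eq0 (negbTE (sa k ltac:(lia))) orbF => /eqP.
Qed.

Lemma chord_ptolemy w : Omega R n w ->
  (forall k, (2 <= k <= n - 2)%N -> tt w k = chord w k) <->
  forall k, (k < n - 3)%N ->
    ptolemy (tt w k) (tt w k.+1) (tt w k.+2) (alphak w k) (alphak w k.+1) = 0.
Proof.
move=> Om; pose d k := tt w k - chord w k.
have ptolemy_d k : ptolemy (d k) (d k.+1) (d k.+2) (alphak w k) (alphak w k.+1) =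
                   ptolemy (tt w k) (tt w k.+1) (tt w k.+2) (alphak w k) (alphak w k.+1).
  by rewrite ptolemyB /chord !thetaS ptolemy_sinusoid subr0.
have d0 : d 0 = 0 by rewrite /d chord0 subrr.
have d1 : d 1 = 0.
  by rewrite /d chord1 ?subrr //; apply: Omega_sin_alphak Om _; lia.
have sa k : (k < n - 3)%N -> sin (alphak w k) != 0.
  by move=> hk; apply: Omega_sin_alphak Om _; lia.
apply: iff_sym; under eq_forall do rewrite -ptolemy_d.
rewrite (ptolemy_seq_eq0 d0 d1 sa) (_ : (n - 3).+1 = n - 2)%N; last by lia.
split=> h k hk.
  by have := h k ltac:(lia); rewrite /d => /eqP; rewrite subr_eq0 => /eqP.
have [k_lt2 | k2] : (k < 2)%N \/ (2 <= k <= n - 2)%N by lia.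
  by case: k {hk} k_lt2 => [|[|//]] _.
by rewrite /d h ?subrr.
Qed.

Lemma inscribable_Theta w : Omega R n w ->
  inscribable w <-> forall k, (k < n - 3)%N ->
    Theta (tt w k) (xx w k) (tt w k.+1) (xx w k.+1) (tt w k.+2) = 0.
Proof.
move=> Om; rewrite inscribable_chord // chord_ptolemy //.
have e k : (k < n - 3)%N ->
    ptolemy (tt w k) (tt w k.+1) (tt w k.+2) (alphak w k) (alphak w k.+1) = 0 <->
    Theta (tt w k) (xx w k) (tt w k.+1) (xx w k.+1) (tt w k.+2) = 0.
  by move=> hk; apply: ptolemy_alpha_eq0; apply: Omega_inV Om _; lia.
by split=> h k hk; apply/(e k hk)/h.
Qed.

Lemma gamma_eq0 w : gamma w = 0 <->
  forall k, (k < n - 3)%N ->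
    Theta (tt w k) (xx w k) (tt w k.+1) (xx w k.+1) (tt w k.+2) = 0.
Proof.
split=> [/matrixP h k hk | h]; last by apply/matrixP => i j; rewrite !mxE; apply: h.
by have := h ord0 (Ordinal hk); rewrite !mxE.
Qed.

Lemma Gamma_gamma : Gamma R n = Omega R n `&` [set w | gamma w = 0].
Proof.
apply/seteqP; split=> w [Om h]; split=> //=.
  exact/gamma_eq0/(inscribable_Theta Om).
exact/(inscribable_Theta Om)/gamma_eq0.
Qed.

End Inscribed.

Lemma coord_ord (R : realType) m (w : 'rV[R]_m) (i : 'I_m) : coord w i = w ord0 i.
Proof. by rewrite /coord insubT //= => h; congr (w _ _); apply: val_inj. Qed.

Lemma coord_tt_xx (R : realType) m (w : 'rV[R]_m) i :
  coord w i = if odd i then xx w i./2 else tt w i./2.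
Proof.
by rewrite /tt /xx; case: ifP => odd_i; congr coord;
  rewrite -[in LHS](odd_double_half i) odd_i -muln2; lia.
Qed.

Lemma half_bound i m : (i < 2 * m - 3)%N ->
  (i./2 <= m - 2)%N /\ (odd i -> i./2 < m - 2)%N.
Proof. by have := odd_double_half i; rewrite -muln2; case: (odd i) => /=; lia. Qed.

Section ExprBuilders.
Variables (R : realType) (m : nat).
Implicit Types (y : 'rV[R]_m) (a b c : expr R).

Definition e_sub a b : expr R := EAdd a (ENeg b).
Definition e_sq a : expr R := EMul a a.

Fixpoint e_sum (f : nat -> expr R) k : expr R :=
  if k is k'.+1 then EAdd (e_sum f k') (f k') else ECst 0.

Definition e_law_cos a b c : expr R :=
  EMul (e_sub (EAdd (e_sq a) (e_sq c)) (e_sq b)) (EInv (EMul (EMul (ECst 2) a) c)).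

Definition e_chord_of (t0 t1 a0 th : expr R) : expr R :=
  EAdd (EMul t0 (ECos th))
       (EMul (EMul (e_sub t1 (EMul t0 (ECos a0))) (EInv (ESin a0))) (ESin th)).

Definition e_third_side (t t' a : expr R) : expr R :=
  ESqrt (e_sub (EAdd (e_sq t) (e_sq t')) (EMul (EMul (EMul (ECst 2) t) t') (ECos a))).

Lemma eval_e_sub a b y : eval (e_sub a b) y = eval a y - eval b y.
Proof. by []. Qed.

Lemma eval_e_chord_of t0 t1 a0 th y : eval (e_chord_of t0 t1 a0 th) y =
  chord_of (eval t0 y) (eval t1 y) (eval a0 y) (eval th y).
Proof. by []. Qed.

Lemma eval_e_third_side t t' a y :
  eval (e_third_side t t' a) y = third_side (eval t y) (eval t' y) (eval a y).
Proof. by rewrite /= /third_side !expr2. Qed.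

Lemma eval_e_law_cos a b c y :
  eval (e_law_cos a b c) y = law_cos (eval a y) (eval b y) (eval c y).
Proof. by rewrite /= /law_cos !expr2. Qed.

Lemma eval_e_sum f k y : eval (e_sum f k) y = \sum_(j < k) eval (f j) y.
Proof. by elim: k => [|k ih] /=; rewrite ?big_ord0 // big_ord_recr /= ih. Qed.

Lemma defined_e_law_cos a b c y : defined a y -> defined b y -> defined c y ->
  eval a y != 0 -> eval c y != 0 -> defined (e_law_cos a b c) y.
Proof. by move=> *; do !split => //; rewrite /= !mulf_neq0 ?pnatr_eq0. Qed.

Lemma defined_e_chord_of t0 t1 a0 th y :
  defined t0 y -> defined t1 y -> defined a0 y -> defined th y ->
  sin (eval a0 y) != 0 -> defined (e_chord_of t0 t1 a0 th) y.
Proof. by move=> *; do !split. Qed.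

Lemma defined_e_sum f k y : (forall j, (j < k)%N -> defined (f j) y) ->
  defined (e_sum f k) y.
Proof.
elim: k => [//|k ih] hf; split; last exact: hf.
by apply: ih => j hj; apply: hf; lia.
Qed.

Lemma near_inV a b c (x : 'rV[R]_m) : defined a x -> defined b x -> defined c x ->
  inV (eval a x) (eval b x) (eval c x) ->
  \forall y \near x, inV (eval a y) (eval b y) (eval c y).
Proof.
move=> da db dc [/andP[a0 abc] /andP[b0 bac] /andP[c0 cab]].
have near_lt u v v' : defined u x -> defined v x -> defined v' x ->
    eval u x < eval v x + eval v' x ->
    \forall y \near x, eval u y < eval v y + eval v' y.
  move=> du dv dv' h.
  have := near_eval_gt0 (e := e_sub (EAdd v v') u) (conj (conj dv dv') du).
  rewrite eval_e_sub subr_gt0 => /(_ h); apply: filterS => y.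
  by rewrite eval_e_sub subr_gt0.
have := near_lt _ _ _ da db dc abc; have := near_lt _ _ _ db da dc bac.
have := near_lt _ _ _ dc da db cab.
have := near_eval_gt0 da a0; have := near_eval_gt0 db b0; have := near_eval_gt0 dc c0.
move=> n1 n2 n3 n4 n5 n6; near=> y.
by split; apply/andP; split; near: y.
Unshelve. all: by end_near.
Qed.

End ExprBuilders.

Section Chart.
Variables (R : realType) (n : nat).
Hypothesis n_ge4 : (4 <= n)%N.
Local Notation N := (2 * n - 3)%N.
Local Notation expr := (expr R).
Implicit Types (w y : 'rV[R]_N) (a b c : expr).

Definition e_tt k : expr := EVar (2 * k).
Definition e_xx k : expr := EVar (2 * k + 1).
Definition e_alphak k : expr := EAcos (e_law_cos (e_tt k) (e_xx k) (e_tt k.+1)).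
Definition e_chord k : expr :=
  e_chord_of (e_tt 0) (e_tt 1) (e_alphak 0) (e_sum e_alphak k).

Definition chart_coord i : expr :=
  if (i < 2)%N then e_tt i
  else if (i < n)%N then e_alphak (i - 2)
  else e_sub (e_tt (i - n + 2)) (e_chord (i - n + 2)).

Definition unchart_tt k : expr :=
  if (k < 2)%N then EVar k
  else EAdd (EVar (k + n - 2))
            (e_chord_of (EVar 0) (EVar 1) (EVar 2) (e_sum (fun j => EVar j.+2) k)).

Definition unchart_coord i : expr :=
  let k := i./2 in
  if odd i then e_third_side (unchart_tt k) (unchart_tt k.+1) (EVar k.+2)
  else unchart_tt k.

Definition chart : 'rV[R]_N -> 'rV[R]_N := row_expr N chart_coord.
Definition unchart : 'rV[R]_N -> 'rV[R]_N := row_expr N unchart_coord.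

Definition chart_image : set 'rV[R]_N := [set y | [/\
  forall k, (k <= n - 2)%N -> 0 < eval (unchart_tt k) y,
  forall j, (j < n - 2)%N -> 0 < coord y j.+2 < pi &
  \sum_(j < n - 2) coord y j.+2 < 2 * pi]].

Lemma eval_e_alphak k w : eval (e_alphak k) w = alphak w k.
Proof. by rewrite /= /alphak /alpha /tt /xx !expr2. Qed.

Lemma eval_e_theta k w : eval (e_sum e_alphak k) w = theta w k.
Proof. by rewrite eval_e_sum; under eq_bigr do rewrite eval_e_alphak. Qed.

Lemma eval_e_chord k w : eval (e_chord k) w = chord w k.
Proof. by rewrite eval_e_chord_of eval_e_theta eval_e_alphak. Qed.

Lemma chart_tt w k : (k < 2)%N -> coord (chart w) k = tt w k.
Proof. by move=> hk; rewrite coord_row_expr /chart_coord ?hk //; lia. Qed.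

Lemma chart_alphak w j : (j < n - 2)%N -> coord (chart w) j.+2 = alphak w j.
Proof.
move=> hj; rewrite coord_row_expr /chart_coord; last by lia.
by rewrite /= (_ : (j.+2 < n)%N = true) ?eval_e_alphak ?subn2 //; apply/idP; lia.
Qed.

Lemma chart_chord_gap w j : (j < n - 3)%N ->
  coord (chart w) (n + j) = tt w j.+2 - chord w j.+2.
Proof.
move=> hj; rewrite coord_row_expr /chart_coord; last by lia.
rewrite (_ : (n + j < 2)%N = false); last by apply/negbTE; lia.
rewrite (_ : (n + j < n)%N = false); last by apply/negbTE; lia.
by rewrite (_ : (n + j - n + 2 = j.+2)%N) ?eval_e_sub ?eval_e_chord //; lia.
Qed.

Lemma eval_unchart_tt k y : (2 <= k)%N -> eval (unchart_tt k) y =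
  coord y (k + n - 2) + chord_of (coord y 0) (coord y 1) (coord y 2)
                                 (\sum_(j < k) coord y j.+2).
Proof.
move=> k2; rewrite -(eval_e_sum (fun j => EVar j.+2)).
rewrite -(eval_e_chord_of (EVar 0) (EVar 1) (EVar 2)).
by rewrite /unchart_tt ltnNge k2.
Qed.

Lemma unchart_tt_chart w k : (k <= n - 2)%N -> eval (unchart_tt k) (chart w) = tt w k.
Proof.
move=> hk; have [k_lt2 | k2] := ltnP k 2.
  by rewrite /unchart_tt k_lt2; exact: chart_tt.
rewrite eval_unchart_tt // (@chart_tt w 0) // (@chart_tt w 1) //.
rewrite (@chart_alphak w 0); last by lia.
rewrite (_ : (k + n - 2 = n + (k - 2))%N) ?chart_chord_gap; [|lia|lia].
rewrite (_ : (k - 2).+2 = k)%N; last by lia.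
rewrite (eq_bigr (fun j : 'I_k => alphak w j)) => [|j _]; first exact: subrK.
by rewrite chart_alphak //; have := ltn_ord j; lia.
Qed.

Lemma unchartK w : Omega R n w -> unchart (chart w) = w.
Proof.
move=> Om; apply/rowP => i; have [hle hlt] := half_bound (ltn_ord i).
rewrite -[RHS]coord_ord -coord_ord coord_row_expr // [RHS]coord_tt_xx /unchart_coord.
case: ifP => odd_i /=; last exact: unchart_tt_chart.
have hk := hlt odd_i; rewrite !unchart_tt_chart ?chart_alphak //; try lia.
exact: third_side_alpha (Omega_inV Om hk).
Qed.

Lemma tt_unchart y k : (k <= n - 2)%N -> tt (unchart y) k = eval (unchart_tt k) y.
Proof.
move=> hk; rewrite /tt coord_row_expr; last by lia.
by rewrite /unchart_coord (mul2n k) odd_double doubleK.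
Qed.

Lemma xx_unchart y k : (k < n - 2)%N -> xx (unchart y) k =
  third_side (eval (unchart_tt k) y) (eval (unchart_tt k.+1) y) (coord y k.+2).
Proof.
move=> hk; rewrite /xx coord_row_expr -?eval_e_third_side; last by lia.
by rewrite /unchart_coord addn1 (mul2n k) /= odd_double /= uphalf_double.
Qed.

Section Image.
Variable y : 'rV[R]_N.
Hypothesis y_in : chart_image y.

Lemma unchart_triangle k : (k < n - 2)%N ->
  inV (tt (unchart y) k) (xx (unchart y) k) (tt (unchart y) k.+1) /\
  alphak (unchart y) k = coord y k.+2.
Proof.
move=> hk; case: y_in => tpos apos _.
rewrite /alphak xx_unchart // !tt_unchart; try lia.
by apply: third_side_inV; [apply: tpos | apply: tpos | apply: apos]; lia.
Qed.

Lemma unchart_in_Omega : Omega R n (unchart y).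
Proof.
case: (y_in) => tpos _ asum; split; [|split].
- move=> i; rewrite -coord_ord coord_tt_xx; have [hle hlt] := half_bound (ltn_ord i).
  case: ifP => odd_i; first by have [/inV_gt0[]] := unchart_triangle (hlt odd_i).
  by rewrite tt_unchart // tpos.
- by move=> k hk; have [] := unchart_triangle hk.
- by under eq_bigr => j _ do rewrite (proj2 (unchart_triangle (ltn_ord j))).
Qed.

Lemma chord_unchart k : (k <= n - 2)%N -> chord (unchart y) k =
  chord_of (coord y 0) (coord y 1) (coord y 2) (\sum_(j < k) coord y j.+2).
Proof.
move=> hk; rewrite /chord /theta !tt_unchart ?(proj2 (unchart_triangle _)) //; try lia.
by under eq_bigr => j _
  do rewrite (proj2 (unchart_triangle _)) ?(leq_trans (ltn_ord j)) //.
Qed.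

Lemma chartK : chart (unchart y) = y.
Proof.
apply/rowP => i; have hi := ltn_ord i.
rewrite -[RHS]coord_ord -coord_ord coord_row_expr // /chart_coord.
case: ltnP => [i_lt2 | i2].
  change (tt (unchart y) i = coord y i).
  by rewrite tt_unchart /unchart_tt ?i_lt2 //; lia.
case: ltnP => [i_ltn | ni].
  rewrite eval_e_alphak (proj2 (unchart_triangle _)); last by lia.
  by congr coord; lia.
set m := (i - n + 2)%N; have m2 : (2 <= m)%N by lia.
rewrite eval_e_sub eval_e_chord -[eval (e_tt m) _]/(tt (unchart y) m).
rewrite tt_unchart ?chord_unchart ?eval_unchart_tt; try lia.
by rewrite addrK; congr coord; lia.
Qed.

End Image.

Lemma chart_in_image w : Omega R n w -> chart_image (chart w).
Proof.
move=> Om; split.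
- by move=> k hk; rewrite unchart_tt_chart // Omega_tt_gt0.
- by move=> j hj; rewrite chart_alphak //; exact: alpha_in_0pi (Omega_inV Om hj).
- by case: Om => _ [_ hs]; under eq_bigr => j _ do rewrite chart_alphak //.
Qed.

Lemma defined_e_alphak w k : Omega R n w -> (k < n - 2)%N -> defined (e_alphak k) w.
Proof.
move=> Om hk; have h := Omega_inV Om hk; have [t0 _ t1] := inV_gt0 h.
split; last by rewrite eval_e_law_cos; exact: law_cos_bounds h.
by apply: defined_e_law_cos; rewrite ?gt_eqF.
Qed.

Lemma defined_e_theta w k : Omega R n w -> (k <= n - 2)%N ->
  defined (e_sum e_alphak k) w.
Proof.
by move=> Om hk; apply: defined_e_sum => j hj; apply: defined_e_alphak Om _; lia.
Qed.

Lemma defined_chart_coord w : Omega R n w ->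
  forall i, (i < N)%N -> defined (chart_coord i) w.
Proof.
move=> Om i hi; rewrite /chart_coord.
case: ltnP => // i2; case: ltnP => [i_ltn | ni].
  by apply: defined_e_alphak Om _; lia.
split=> //; change (defined (e_chord (i - n + 2)) w).
apply: defined_e_chord_of => //; first by apply: defined_e_alphak Om _; lia.
  by apply: defined_e_theta Om _; lia.
by rewrite eval_e_alphak; apply: Omega_sin_alphak Om _; lia.
Qed.

Lemma defined_unchart_tt y k : sin (coord y 2) != 0 -> defined (unchart_tt k) y.
Proof.
move=> s2; rewrite /unchart_tt; case: ltnP => // _; split => //.
by apply: defined_e_chord_of => //; apply: defined_e_sum.
Qed.

Lemma defined_unchart_coord y : chart_image y ->
  forall i, (i < N)%N -> defined (unchart_coord i) y.
Proof.
case=> tpos apos _ i hi.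
have s2 : sin (coord y 2) != 0 by rewrite gt_eqF //; apply/sin_gt0_pi/apos; lia.
rewrite /unchart_coord; case: ifP => odd_i; last exact: defined_unchart_tt.
have [_ /(_ odd_i) hk] := half_bound hi.
have [/inV_gt0[_ x_gt0 _] _] :=
  third_side_inV (tpos _ (ltnW hk)) (tpos i./2.+1 hk) (apos _ hk).
split; first by do !split; apply: defined_unchart_tt.
by move: x_gt0; rewrite -(eval_e_third_side _ _ (EVar i./2.+2)) sqrtr_gt0.
Qed.

Lemma open_Omega : open (Omega R n).
Proof.
rewrite openE => x Ox; have [xpos [xinV xsum]] := Ox; rewrite /interior.
have npos : \forall y \near x, forall i, (i < N)%N -> 0 < coord y i.
  apply: near_forall_ltn => i hi; apply: (near_eval_gt0 (e := EVar i)) => //.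
  by have := xpos (Ordinal hi); rewrite -coord_ord.
have ninV : \forall y \near x,
    forall k, (k < n - 2)%N -> inV (tt y k) (xx y k) (tt y k.+1).
  apply: near_forall_ltn => k hk.
  exact: (near_inV (a := e_tt k) (b := e_xx k) (c := e_tt k.+1) I I I (xinV k hk)).
have nsum : \forall y \near x, \sum_(k < n - 2) alphak y k < 2 * pi.
  have := @near_eval_lt _ _ (e_sum e_alphak (n - 2)) x (2 * pi).
  rewrite eval_e_theta => /(_ (defined_e_theta Ox (leqnn _)) xsum).
  by apply: filterS => y; rewrite eval_e_theta.
near=> y; split; last by split; near: y.
have y_pos : forall i, (i < N)%N -> 0 < coord y i by near: y.
by move=> i; rewrite -coord_ord; apply: y_pos.
Unshelve. all: by end_near.
Qed.

Lemma open_chart_image : open chart_image.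
Proof.
rewrite openE => x Vx; have [tpos apos asum] := Vx; rewrite /interior.
have s2 : sin (coord x 2) != 0 by rewrite gt_eqF //; apply/sin_gt0_pi/apos; lia.
have ntt : \forall y \near x, forall k, (k < (n - 2).+1)%N -> 0 < eval (unchart_tt k) y.
  apply: near_forall_ltn => k hk.
  exact: near_eval_gt0 (defined_unchart_tt k s2) (tpos k hk).
have nalpha : \forall y \near x, forall j, (j < n - 2)%N -> 0 < coord y j.+2 < pi.
  apply: near_forall_ltn => j hj; have /andP[a0 api] := apos j hj.
  have := near_eval_gt0 (e := EVar j.+2) I a0.
  have := near_eval_lt (e := EVar j.+2) I api.
  by move=> n1 n2; near=> y; apply/andP; split; near: y.
have nsum : \forall y \near x, \sum_(j < n - 2) coord y j.+2 < 2 * pi.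
  have dsum : defined (e_sum (fun j => EVar j.+2) (n - 2)) x by apply: defined_e_sum.
  have := near_eval_lt dsum; rewrite eval_e_sum => /(_ _ asum).
  by apply: filterS => y; rewrite eval_e_sum.
by near=> y; split; near: y.
Unshelve. all: by end_near.
Qed.

Lemma Gamma_chart w : Omega R n w ->
  Gamma R n w <-> forall i : 'I_N, (n <= i)%N -> chart w ord0 i = 0.
Proof.
move=> Om; apply: (@iff_trans _ (inscribable w)); first by split=> [[]|].
rewrite inscribable_chord //; split=> h.
  move=> i ni; have hi := ltn_ord i; rewrite -coord_ord.
  rewrite (_ : nat_of_ord i = n + (i - n))%N ?chart_chord_gap; [|lia|lia].
  by rewrite h ?subrr //; lia.
move=> k /andP[k2 kn]; have hi : (n + (k - 2) < N)%N by lia.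
have := h (Ordinal hi) ltac:(rewrite /=; lia).
rewrite -coord_ord /= chart_chord_gap; last by lia.
by rewrite (_ : (k - 2).+2 = k)%N; [move/eqP; rewrite subr_eq0 => /eqP | lia].
Qed.

End Chart.

Theorem proposition2p3 (R : realType) (n : nat) (hn : (4 <= n)%N) :
  Gamma R n = Omega R n `&` [set w | gamma w = 0] /\
  submanifold n (Gamma R n).
Proof.
split; first exact: Gamma_gamma.
move=> w [Om _].
exists (Omega R n), (@chart_image R n), (@chart R n), (@unchart R n); split; split.
- exact: open_Omega.
- exact: Om.
- exact: open_chart_image.
- by apply: smooth_row_expr; [exact: open_Omega | exact: defined_chart_coord].
- by apply: smooth_row_expr; [exact: open_chart_image | exact: defined_unchart_coord].
- by move=> x Ox; split; [exact: chart_in_image | exact: unchartK].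
- by move=> y Vy; split; [exact: unchart_in_Omega | exact: chartK].
- by move=> x Ox; exact: Gamma_chart.
Qed.
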